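(* Let $n\ge 3$ and let $S$ be a $4$-cap free, $n$-cup free configuration of size at least $\binom{n-1}{2}+1$. Let $L(S)$ be the set of starting points of all $(n-1)$-cups in $S$, $R(S)$ the set of ending points of all $(n-1)$-cups in $S$, $p_S$ the largest element of $L(S)$ and $q_S$ the smallest element of $R(S)$. Then $p_S \leq q_S$.
   Context: A configuration is a finite set $S$ of points with a linear order $<$ and, for every $3$-element subset, an arbitrary assignment declaring it either a cap or a cup. Points $x_1<\cdots<x_a$ form an $a$-cup (resp. $a$-cap) if every consecutive triple $\{x_{i-1},x_i,x_{i+1}\}$, $1<i<a$, is assigned cup (resp. cap); $1$- and $2$-element sets are both caps and cups. A cup $x_1\cdots x_a$ starts with $x_1$ and ends with $x_a$. (Under the hypotheses, $S$ contains at least one $(n-1)$-cup, so $L(S)$ and $R(S)$ are nonempty.) *)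

From mathcomp Require Import all_boot all_order.
Set Implicit Arguments. Unset Strict Implicit. Unset Printing Implicit Defensive.

(* A configuration of size N: points are 'I_N, linearly ordered by their index.
   [cup i j k] (for i < j < k) says whether the triple {i,j,k} is a cup;
   otherwise it is a cap.  The value of [cup] on non-increasing triples is
   irrelevant. *)
Record config (N : nat) := Config { cup : 'I_N -> 'I_N -> 'I_N -> bool }.

Fixpoint consec3 (N : nat) (P : 'I_N -> 'I_N -> 'I_N -> bool) (s : seq 'I_N) : bool :=
  match s with
  | x :: ((y :: z :: _) as t) => P x y z && consec3 P t
  | _ => true
  end.

Definition incr (N : nat) (s : seq 'I_N) : bool := sorted (fun x y : 'I_N => x < y) s.

Definition is_cup (N : nat) (S : config N) (a : nat) (s : seq 'I_N) : bool :=
  [&& size s == a, incr s & consec3 (cup S) s].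
Definition is_cap (N : nat) (S : config N) (a : nat) (s : seq 'I_N) : bool :=
  [&& size s == a, incr s & consec3 (fun x y z => ~~ cup S x y z) s].

Definition cup_free (N : nat) (S : config N) (a : nat) : Prop :=
  forall s, ~~ is_cup S a s.
Definition cap_free (N : nat) (S : config N) (a : nat) : Prop :=
  forall s, ~~ is_cap S a s.

Definition Lset (N : nat) (S : config N) (n : nat) : {set 'I_N} :=
  [set x | [exists t : (n.-1).-tuple 'I_N, is_cup S n.-1 t && (head x t == x)]].
Definition Rset (N : nat) (S : config N) (n : nat) : {set 'I_N} :=
  [set x | [exists t : (n.-1).-tuple 'I_N, is_cup S n.-1 t && (last x t == x)]].

(* p_S = max L(S), q_S = min R(S) (as indices; sets are nonempty under the
   hypotheses, so the default values are never used) *)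
Definition pS (N : nat) (S : config N) (n : nat) : nat := \max_(i in Lset S n) (i : nat).
Definition qS (N : nat) (S : config N) (n : nat) : nat := \big[minn/N]_(i in Rset S n) (i : nat).

From mathcomp Require Import all_boot all_order.
Set Implicit Arguments. Unset Strict Implicit. Unset Printing Implicit Defensive.

(* If some q < p had p starting an (n-1)-cup p b ... and q ending an (n-1)-cup
   ... a q, then a < q < p < b.  Were {a,q,p} a cup, the first cup would extend
   to an n-cup; were {q,p,b} a cup, the second one would.  Otherwise a q p b is
   a 4-cap. *)

Lemma consec3_cons2 N (P : 'I_N -> 'I_N -> 'I_N -> bool) u v r :
  consec3 P [:: u, v & r] = (if r is w :: _ then P u v w else true) && consec3 P (v :: r).
Proof. by case: r => //= w r; case: r. Qed.

Lemma consec3_cat3 N (P : 'I_N -> 'I_N -> 'I_N -> bool) s x y z :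
  consec3 P (s ++ [:: x; y; z]) = consec3 P (s ++ [:: x; y]) && P x y z.
Proof.
case: s => [|u s]; first by rewrite /= andbT.
elim: s u => [|v s IH] u; first by rewrite /= !andbT.
rewrite !cat_cons !consec3_cons2 -!cat_cons IH.
by case: s {IH} => [|w s] /=; rewrite andbA.
Qed.

Section CupExtension.

Variables (N : nat) (S : config N) (m : nat).

Lemma is_cup_consl (w x y : 'I_N) r :
  is_cup S m [:: x, y & r] -> w < x -> cup S w x y -> is_cup S m.+1 [:: w, x, y & r].
Proof.
case/and3P=> size_xyr incr_xyr cup_xyr wx wxy; apply/and3P; split.
- by rewrite -(eqP size_xyr).
- by rewrite /incr /= wx.
- by rewrite -[consec3 _ _]/(cup S w x y && consec3 (cup S) [:: x, y & r]) wxy.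
Qed.

Lemma is_cup_rcons s (x y z : 'I_N) :
  is_cup S m (s ++ [:: x; y]) -> y < z -> cup S x y z -> is_cup S m.+1 (s ++ [:: x; y; z]).
Proof.
case/and3P=> size_sxy incr_sxy cup_sxy yz xyz; apply/and3P; split.
- by rewrite !size_cat /= addnS -(eqP size_sxy) size_cat.
- by move: incr_sxy; rewrite /incr !sorted_cat_cons /= yz !andbT.
- by rewrite consec3_cat3 cup_sxy xyz.
Qed.

End CupExtension.

Lemma Lset_cup_head n N (S : config N) p :
  2 <= n.-1 -> p \in Lset S n -> exists b r, is_cup S n.-1 [:: p, b & r].
Proof.
move=> n1_ge2; rewrite inE => /existsP[[s _] /andP[/= s_cup /eqP]].
case: s s_cup => [|p' [|b r]] s_cup; last by move=> /= <-; exists b, r.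
all: by case/and3P: s_cup => /eqP size_s; rewrite -size_s in n1_ge2.
Qed.

Lemma Rset_cup_last n N (S : config N) q :
  2 <= n.-1 -> q \in Rset S n -> exists s a, is_cup S n.-1 (s ++ [:: a; q]).
Proof.
move=> n1_ge2; rewrite inE => /existsP[[t _] /andP[/= t_cup /eqP]].
case/lastP: t t_cup => [|t q'] t_cup.
  by case/and3P: t_cup => /eqP size_t; rewrite -size_t in n1_ge2.
case/lastP: t t_cup => [|s a] t_cup.
  by case/and3P: t_cup => /eqP size_t; rewrite -size_t in n1_ge2.
by rewrite last_rcons => <-; exists s, a; rewrite -!cats1 -catA in t_cup.
Qed.

Lemma Lset_le_Rset n N (S : config N) p q :
  3 <= n -> cap_free S 4 -> cup_free S n ->
  p \in Lset S n -> q \in Rset S n -> p <= q.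
Proof.
move=> n_ge3 cap4 cupn pL qR; have n1_ge2 : 2 <= n.-1 by case: n n_ge3 {cupn pL qR}.
have n1K : n.-1.+1 = n by case: n n_ge3 {cupn pL qR n1_ge2}.
have [b [r p_cup]] := Lset_cup_head n1_ge2 pL.
have [s [a q_cup]] := Rset_cup_last n1_ge2 qR.
rewrite leqNgt; apply/negP => qp.
have pb : p < b by case/and3P: p_cup => _ /andP[].
have aq : a < q.
  by case/and3P: q_cup => _; rewrite /incr sorted_cat_cons /= andbT => /andP[].
have not_aqp : ~~ cup S a q p.
  by apply/negP => aqp; have := cupn (s ++ [:: a; q; p]); rewrite -n1K is_cup_rcons.
have not_qpb : ~~ cup S q p b.
  by apply/negP => qpb; have := cupn [:: q, p, b & r]; rewrite -n1K is_cup_consl.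
by have := cap4 [:: a; q; p; b]; rewrite /is_cap /incr /= aq qp pb not_aqp not_qpb.
Qed.

(* The size hypothesis only guarantees that L(S) and R(S) are nonempty; when
   either is empty the defaults 0 and N make the inequality hold anyway. *)
Theorem lemma5p6 (n N : nat) (S : config N) :
  3 <= n ->
  cap_free S 4 ->
  cup_free S n ->
  'C(n.-1, 2) + 1 <= N ->
  pS S n <= qS S n.
Proof.
move=> n_ge3 cap4 cupn _.
apply/bigmax_leqP => p pL; rewrite /qS; elim/big_ind: _.
- exact: ltnW (ltn_ord p).
- by move=> x y px py; rewrite leq_min px py.
- by move=> q qR; apply: Lset_le_Rset pL qR.
Qed.
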